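(* Let $X$ be the Markov process on the star graph $\Gamma$ generated by the operator $(L,D(L))$ described in the context, for some finite stickiness parameter $\eta\ge 0$. Then the vertex $\mathsf v$ is not a trap for $X$, i.e. it is not true that $\mathbf P_{\mathsf v}(\xi_{\mathsf v}>t)=1$ for every $t>0$, where $\xi_{\mathsf v}:=\inf\{s>0: X(s)\neq \mathsf v\}$.
   Context: Star graph: fix $N\ge1$. $\Gamma$ is the quotient of the disjoint union of $N$ copies of $[0,\infty)$ obtained by identifying all the origins; points are written $(i,x)$ with $i\in\{1,\dots,N\}$, $x\ge 0$, and $\mathsf v=(\cdot,0)$ is the unique vertex. $\Gamma$ carries the metric $d((j,x),(i,y))=|x-y|$ if $i=j$ and $x+y$ if $i\ne j$. A function $f:\Gamma\to\mathbb R$ is identified with $(f_1,\dots,f_N)$, $f_i(x)=f(i,x)$, with $f_i(0)=f_j(0)$ for all $i,j$; derivatives are taken edgewise (one-sided at $0$, not required to agree across edges). $C_0(\Gamma)$: continuous functions on $\Gamma$ vanishing at infinity on each edge. $C^2(\Gamma)$: continuous $f$ on $\Gamma$ with each $f_i\in C^2([0,\infty))$. $PC(\Gamma)$: functions whose restrictions $f_i$ are bounded and continuous on $(0,\infty)$ and extend continuously to $[0,\infty)$. Coefficients: $\sigma,b\in PC(\Gamma)$ with $\sigma>\sigma_0$ on $\Gamma$ for some constant $\sigma_0>0$. Operator: $Lf(i,x)=\frac12\sigma_i^2(x)f_i''(x)+b_i(x)f_i'(x)$ for $x>0$; when the limits $\lim_{x\to0}L_if(x)$ coincide for all $i$, $Lf(\mathsf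 v)$ denotes this common value. Fix $\eta\ge0$ and $\rho_1,\dots,\rho_N>0$ with $\sum_i\rho_i=1$, and set $D(L)=\{f\in C^2(\Gamma)\cap C_0(\Gamma): Lf\in C_0(\Gamma),\ \eta Lf(\mathsf v)=\sum_{i=1}^N\rho_if_i'(0)\}$. It is known that $(L,D(L))$ generates a strongly continuous semigroup on $C_0(\Gamma)$ associated with a conservative Markov process $X(t)=(i(t),x(t))$ on $\Gamma$ with continuous paths; $\mathbf P_{\mathsf x},\mathbf E_{\mathsf x}$ denote probability and expectation for the process started at $\mathsf x$. *)

From HB Require Import structures.
From mathcomp Require Import all_boot all_order all_algebra.
From mathcomp Require Import all_classical all_reals all_analysis.
Set Implicit Arguments. Unset Strict Implicit. Unset Printing Implicit Defensive.
Import Order.TTheory GRing.Theory Num.Theory.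
Import numFieldNormedType.Exports.
Local Open Scope classical_set_scope.
Local Open Scope ring_scope.

Section StarGraph.
Variables (R : realType) (n : nat).
(* The star graph with N = n.+1 edges, indexed by 'I_n.+1.  A point is a pair
   (i, x) with x >= 0; the vertex is represented uniquely by (ord0, 0),
   which realises the identification of all origins. *)
Definition gpred : pred ('I_n.+1 * R) :=
  fun p => (0 <= p.2) && ((p.2 == 0) ==> (p.1 == ord0)).
Definition Gamma := {p : 'I_n.+1 * R | gpred p}.

Lemma vtx_proof : gpred (ord0, 0).
Proof. by rewrite /gpred /= lexx eqxx. Qed.
Definition vtx : Gamma := exist _ (ord0, 0) vtx_proof.

(* the point (i,x); for x <= 0 this is the vertex *)
Definition gpoint (i : 'I_n.+1) (x : R) : Gamma := insubd vtx (i, x).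

Definition edge (f : Gamma -> R) (i : 'I_n.+1) : R -> R := fun x => f (gpoint i x).

(* coordinate maps: coord i p = x if p = (i,x), 0 otherwise; together they
   embed Gamma homeomorphically in R^N *)
Definition coord (i : 'I_n.+1) (p : Gamma) : R :=
  if (sval p).1 == i then (sval p).2 else 0.

Definition C0 (f : Gamma -> R) : Prop :=
  forall i, {within `[0, +oo[, continuous (edge f i)} /\
            (edge f i @ +oo --> 0).

Definition rderiv0 (g : R -> R) : R := lim ((fun h => (g h - g 0) / h) @ 0^'+).

Definition C2e (g : R -> R) : Prop :=
  [/\ (forall x, 0 < x -> derivable g x 1),
      (forall x, 0 < x -> derivable (derive1 g) x 1) &
      {in `]0, +oo[, continuous (derive1 (derive1 g))}] /\
  [/\ g @ 0^'+ --> g 0,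
      cvg ((derive1 g) @ 0^'+), cvg (derive1 (derive1 g) @ 0^'+) &
      cvg ((fun h => (g h - g 0) / h) @ 0^'+)].

Definition C2 (f : Gamma -> R) : Prop := forall i, C2e (edge f i).

Definition PC (c : 'I_n.+1 -> R -> R) : Prop :=
  forall i, [/\ exists M, forall x, 0 < x -> `|c i x| <= M,
                {in `]0, +oo[, continuous (c i)} &
                cvg (c i @ 0^'+)].

Definition Li (sig b : 'I_n.+1 -> R -> R) (f : Gamma -> R) (i : 'I_n.+1)
  (x : R) : R :=
  2^-1 * (sig i x) ^+ 2 * derive1 (derive1 (edge f i)) x + b i x * derive1 (edge f i) x.

(* Lf as a function on Gamma; at the vertex, Lf(v) := lim_{x->0+} L_0 f(x)
   (when Lf is in C_0 all the edge limits coincide with it) *)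
Definition Lop (sig b : 'I_n.+1 -> R -> R) (f : Gamma -> R) (p : Gamma) : R :=
  if 0 < (sval p).2 then Li sig b f (sval p).1 (sval p).2
  else lim (Li sig b f ord0 @ 0^'+).

Definition DL (sig b : 'I_n.+1 -> R -> R) (eta : R) (rho : 'I_n.+1 -> R)
  (f : Gamma -> R) : Prop :=
  [/\ C2 f, C0 f, C0 (Lop sig b f) &
      eta * Lop sig b f vtx = \sum_i rho i * rderiv0 (edge f i)].

Variables (d : measure_display) (Omega : measurableType d).

Definition Tsg (P : Gamma -> probability Omega R) (X : Omega -> R -> Gamma)
  (t : R) (f : Gamma -> R) (x : Gamma) : R :=
  fine (\int[P x]_w (f (X w t))%:E)%E.

Definition gen_lim (T : R -> (Gamma -> R) -> Gamma -> R) (f g : Gamma -> R) :=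
  forall e : R, 0 < e ->
    \forall t \near 0^'+, forall p, `|(T t f p - f p) / t - g p| < e.

Definition generated_process (sig b : 'I_n.+1 -> R -> R) (eta : R)
  (rho : 'I_n.+1 -> R) (P : Gamma -> probability Omega R)
  (X : Omega -> R -> Gamma) : Prop :=
  [/\
      (forall t i, measurable_fun setT (fun w => coord i (X w t))),
      (forall w i, {within `[0, +oo[, continuous (fun t => coord i (X w t))}),
      (forall x, P x [set w | X w 0 = x] = 1%E) &
      (* Markov property (finite-dimensional form, natural filtration) *)
      (forall x (gs : seq (R * (Gamma -> R))) s t f,
          0 <= s -> 0 <= t -> C0 f ->
          all (fun q => (0 <= q.1) && (q.1 <= s)) gs ->
          (forall q, q \in gs -> C0 q.2) ->
          (\int[P x]_w (((\prod_(q <- gs) q.2 (X w q.1)) * f (X w (s + t)))%R)%:E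
           = \int[P x]_w (((\prod_(q <- gs) q.2 (X w q.1))
                           * Tsg P X t f (X w s))%R)%:E)%E)] /\
  [/\
      (forall t f, 0 <= t -> C0 f -> C0 (Tsg P X t f)),
      (forall f, C0 f -> forall e : R, 0 < e ->
          \forall t \near 0^'+, forall p, `|Tsg P X t f p - f p| < e) &
      ((forall f, C0 f ->
          (DL sig b eta rho f <-> exists g, C0 g /\ gen_lim (Tsg P X) f g)) /\
       (forall f, DL sig b eta rho f -> gen_lim (Tsg P X) f (Lop sig b f)))].

Definition xi_v (X : Omega -> R -> Gamma) (w : Omega) : \bar R :=
  ereal_inf [set (s%:E)%E | s in [set s : R | 0 < s /\ X w s <> vtx]].

End StarGraph.

From Pilot Require Import Defs.
From HB Require Import structures.
From mathcomp Require Import all_boot all_order all_algebra.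
From mathcomp Require Import all_classical all_reals all_analysis.
From mathcomp Require Import ring lra measurable_realfun.
Import Order.TTheory GRing.Theory Num.Theory.
Import numFieldNormedType.Exports.
Local Open Scope classical_set_scope.
Local Open Scope ring_scope.

(** If the vertex were a trap, X(t) = v P_v-almost surely for every t > 0, so
    T_t f (v) = f (v) for all t and hence L f (v) = 0 for every f in D(L).  This is refuted
    by a test function with L f (v) = 1: on edge i take f_i(x) = q_i(1/(1+x)) with q_i a
    cubic without constant term.  Since d/dx q(1/(1+x)) = (-X^2 q')(1/(1+x)), such an f and
    its derivatives vanish at infinity, and the three coefficients of q_i can be chosen to
    give f_i(0) = 0, f_i'(0) = eta and sigma_i(0+)^2 f_i''(0)/2 + b_i(0+) eta = 1; the
    gluing condition then reads eta = eta * sum_i rho_i.  The event {xi_v > t} is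
    measurable because, by path continuity, it only involves the path at rational times. *)

Section EqualOnPositives.
Context {R : realType} {f h : R -> R}.
Hypothesis fh : forall y, 0 < y -> f y = h y.

Lemma near_eq_pos (x : R) : 0 < x -> \forall y \near x, f y = h y.
Proof. by move=> x_gt0; apply: filterS (lt_nbhsr x_gt0); exact: fh. Qed.

Lemma derivable_eq_pos (x : R) : 0 < x -> derivable h x 1 -> derivable f x 1.
Proof.
move=> x_gt0; apply: near_eq_derivable.
by near=> y; apply/esym/fh; near: y; exact: lt_nbhsr.
Unshelve. all: by end_near. Qed.

Lemma derive1_eq_pos (x : R) : 0 < x -> derive1 f x = derive1 h x.
Proof. by move=> x_gt0; rewrite !derive1E; apply: near_eq_derive; exact: near_eq_pos. Qed.

Lemma continuous_eq_pos (x : R) : 0 < x -> {for x, continuous h} -> {for x, continuous f}.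
Proof.
move=> x_gt0 hx; rewrite /prop_for /continuous_at fh //.
apply: cvg_trans hx; apply: near_eq_cvg.
by near=> y; apply/esym/fh; near: y; exact: lt_nbhsr.
Unshelve. all: by end_near. Qed.

Lemma cvg_at_right0_eq_pos (l : R) : h @ 0^'+ --> l -> f @ 0^'+ --> l.
Proof.
apply: cvg_trans; apply: near_eq_cvg.
by near=> y; apply/esym/fh; near: y; exact: nbhs_right_gt.
Unshelve. all: by end_near. Qed.

Lemma cvgy_eq_pos (l : R) : h @ +oo --> l -> f @ +oo --> l.
Proof.
apply: cvg_trans; apply: near_eq_cvg.
by near=> y; apply/esym/fh; near: y; apply: nbhs_pinfty_gt; rewrite num_real.
Unshelve. all: by end_near. Qed.

End EqualOnPositives.

Lemma bounded_mul_cvgy0 {R : realType} {h k : R -> R} {M : R} :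
  (forall y, 0 < y -> `|h y| <= M) -> k @ +oo --> 0 ->
  (fun y => h y * k y) @ +oo --> 0.
Proof.
move=> hM /cvgr0Pnorm_lt k0; apply/cvgr0Pnorm_lt => e e_gt0.
have M1_gt0 : 0 < `|M| + 1 by rewrite ltr_wpDl.
near=> y.
have y_gt0 : 0 < y by near: y; apply: nbhs_pinfty_gt; rewrite num_real.
have ky : `|k y| < e / (`|M| + 1) by near: y; exact: k0 (divr_gt0 e_gt0 M1_gt0).
have hy : `|h y| <= `|M| + 1.
  by rewrite (le_trans (hM y y_gt0)) // (le_trans (ler_norm M)) // lerDl.
rewrite normrM (le_lt_trans (ler_wpM2r (normr_ge0 _) hy)) //.
by rewrite mulrC -ltr_pdivlMr.
Unshelve. all: by end_near. Qed.

Lemma continuous_eq0_on_rat {R : realType} (f : R -> R) (a b x : R) : a < x < b ->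
  {for x, continuous f} -> (forall r : rat, a < ratr r < b -> f (ratr r) = 0) -> f x = 0.
Proof.
move=> /andP[ax xb] fx f_rat; apply/eqP; apply: contraT => fx_neq0.
have : \forall y \near x, [/\ a < y, y < b & f y != 0].
  near=> y; split; near: y; [exact: lt_nbhsr | exact: lt_nbhsl |].
  exact: cvgr_neq0 fx_neq0.
move=> /nbhs_ballP[e e_gt0 ball_sub].
have [y [Be [r _ rE]]] := dense_rat (ex_intro _ x (ballxx x e_gt0)) (ball_open x e).
move: Be; rewrite -rE => /ball_sub[ar rb].
by rewrite f_rat ?ar ?rb ?eqxx.
Unshelve. all: by end_near. Qed.

Section RecipPoly.
Context {R : realType}.

Definition recip1p (x : R) : R := (x + 1)^-1.

Definition deriv_recip (p : {poly R}) : {poly R} := - ('X^2 * p^`()).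

Lemma recip1p0 : recip1p 0 = 1.
Proof. by rewrite /recip1p add0r invr1. Qed.

Lemma horner_deriv_recip0 (p : {poly R}) : (deriv_recip p).[0] = 0.
Proof. by rewrite /deriv_recip !hornerE expr0n /= mul0r oppr0. Qed.

Lemma is_derive_recip1p (x : R) : -1 < x -> is_derive x 1 recip1p (- recip1p x ^+ 2).
Proof.
move=> x_gtN1; have x1_neq0 : x + 1 != 0 by rewrite gt_eqF // -ltrBlDr sub0r.
have -> : recip1p = fun y => (shift 1 y)^-1 by [].
have := is_deriveV (f := shift 1) x1_neq0 (is_derive_shift x 1 1).
by move/is_derive_eq; apply; rewrite -exprVn [_ *: _]mulr1.
Qed.

Lemma is_derive_horner_recip1p (p : {poly R}) (x : R) : -1 < x ->
  is_derive x 1 (fun y => p.[recip1p y]) (deriv_recip p).[recip1p x].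
Proof.
move=> x_gtN1.
have := is_derive1_comp (is_derive_poly p (recip1p x)) (is_derive_recip1p _ x_gtN1).
by move/is_derive_eq; apply; rewrite /deriv_recip !hornerE mulrN mulrC.
Qed.

Lemma derivable_horner_recip1p (p : {poly R}) (x : R) : -1 < x ->
  derivable (fun y => p.[recip1p y]) x 1.
Proof. by move=> /(is_derive_horner_recip1p p)[]. Qed.

Lemma continuous_horner_recip1p (p : {poly R}) (x : R) : -1 < x ->
  {for x, continuous (fun y => p.[recip1p y])}.
Proof.
move=> /(derivable_horner_recip1p p)/derivable1_diffP.
exact: differentiable_continuous.
Qed.

Lemma horner_recip1p_cvg0 (p : {poly R}) : (fun y => p.[recip1p y]) @ 0^'+ --> p.[1].
Proof.
rewrite -[in p.[1]]recip1p0; apply: cvg_at_right_filter.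
by apply: continuous_horner_recip1p; rewrite ltrN10.
Qed.

Lemma horner_recip1p_cvgy (p : {poly R}) : (fun y => p.[recip1p y]) @ +oo --> p.[0].
Proof.
apply: continuous_cvg; first exact: continuous_horner.
apply/gtr0_cvgV0; last exact: cvg_addrr.
by near=> y; rewrite ltr_wpDl // ltW.
Unshelve. all: by end_near. Qed.

End RecipPoly.

Section PolyProfile.
Context {R : realType} {p : {poly R}} {g : R -> R}.
Hypothesis g_profile : forall x, 0 <= x -> g x = p.[recip1p x].

Let Dp := deriv_recip p.
Let DDp := deriv_recip Dp.

Let g_profile_pos (x : R) : 0 < x -> g x = p.[recip1p x].
Proof. by move=> /ltW; exact: g_profile. Qed.

Lemma derive1_profile (x : R) : 0 < x -> derive1 g x = Dp.[recip1p x].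
Proof.
move=> x_gt0; rewrite (derive1_eq_pos g_profile_pos x x_gt0) derive1E.
by apply: derive_val; apply: is_derive_horner_recip1p; lra.
Qed.

Lemma derive2_profile (x : R) : 0 < x -> derive1 (derive1 g) x = DDp.[recip1p x].
Proof.
move=> x_gt0; rewrite (derive1_eq_pos derive1_profile x x_gt0) derive1E.
by apply: derive_val; apply: is_derive_horner_recip1p; lra.
Qed.

Lemma difference_quotient_profile : (fun h => (g h - g 0) / h) @ 0^'+ --> Dp.[1].
Proof.
have [dp <-] : is_derive (0 : R) 1 (fun y => p.[recip1p y]) Dp.[1].
  by rewrite -[in Dp.[1]]recip1p0; apply: is_derive_horner_recip1p; rewrite ltrN10.
apply: cvg_trans (cvg_dnbhs_at_right dp); apply: near_eq_cvg.
near=> h; have h_gt0 : 0 < h by near: h; exact: nbhs_right_gt.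
rewrite /= !g_profile ?lexx ?(ltW h_gt0) //.
by rewrite [h%:A]mulr1 addr0 mulrC.
Unshelve. all: by end_near. Qed.

Lemma profile_C2e : C2e g.
Proof.
split; split.
- move=> x x_gt0; apply: (derivable_eq_pos g_profile_pos x x_gt0).
  by apply: derivable_horner_recip1p; lra.
- move=> x x_gt0; apply: (derivable_eq_pos derive1_profile x x_gt0).
  by apply: derivable_horner_recip1p; lra.
- move=> x; rewrite in_itv /= andbT => x_gt0.
  apply: (continuous_eq_pos derive2_profile x x_gt0).
  by apply: continuous_horner_recip1p; lra.
- rewrite g_profile // recip1p0.
  exact: cvg_at_right0_eq_pos g_profile_pos _ (horner_recip1p_cvg0 p).
- apply/cvg_ex; exists Dp.[1].
  exact: cvg_at_right0_eq_pos derive1_profile _ (horner_recip1p_cvg0 Dp).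
- apply/cvg_ex; exists DDp.[1].
  exact: cvg_at_right0_eq_pos derive2_profile _ (horner_recip1p_cvg0 DDp).
- by apply/cvg_ex; exists Dp.[1]; exact: difference_quotient_profile.
Qed.

Lemma rderiv0_profile : rderiv0 g = Dp.[1].
Proof. exact: cvg_lim difference_quotient_profile. Qed.

Lemma profile_continuous : {within `[0, +oo[, continuous g}.
Proof.
apply/continuous_within_itvcyP; split; last by case: profile_C2e => _ [].
move=> x; rewrite in_itv /= andbT => x_gt0.
apply: (continuous_eq_pos g_profile_pos x x_gt0).
by apply: continuous_horner_recip1p; lra.
Qed.

Lemma profile_cvgy : g @ +oo --> p.[0].
Proof. exact: cvgy_eq_pos g_profile_pos _ (horner_recip1p_cvgy p). Qed.

End PolyProfile.

Section TestPoly.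
Context {R : realType}.
Variables eta K : R.

Definition test_poly : {poly R} :=
  ((K + 6 * eta) / 2) *: 'X - (K + 5 * eta) *: 'X^2 + ((K + 4 * eta) / 2) *: 'X^3.

Let horner_simp := (hornerN, hornerM, hornerD, hornerZ, hornerX, hornerXn, hornerMn, hornerC).

Lemma test_poly_at0 : test_poly.[0] = 0.
Proof. by rewrite !horner_simp; ring. Qed.

Lemma test_poly_at1 : test_poly.[1] = 0.
Proof. by rewrite !horner_simp; field. Qed.

Lemma deriv_recip_test_poly_at1 : (deriv_recip test_poly).[1] = eta.
Proof. by rewrite /deriv_recip !poly.derivE !horner_simp; field. Qed.

Lemma deriv_recip2_test_poly_at1 : (deriv_recip (deriv_recip test_poly)).[1] = K.
Proof. by rewrite /deriv_recip !poly.derivE !horner_simp; field. Qed.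

End TestPoly.

Section StarGraph.
Context {R : realType} {n : nat}.

Lemma gpoint_val (i : 'I_n.+1) (x : R) :
  sval (gpoint i x) = if 0 < x then (i, x) else (ord0, 0).
Proof.
rewrite /gpoint val_insubd /gpred /=.
by case: ltgtP => //= ->; case: eqP => // ->.
Qed.

Lemma coord_ge0 (i : 'I_n.+1) (p : Gamma R n) : 0 <= Defs.coord i p.
Proof. rewrite /Defs.coord; case: ifP => // _; by case: p => -[j x] /= /andP[]. Qed.

Lemma coord_vtx (i : 'I_n.+1) : Defs.coord i (vtx R n) = 0.
Proof. by rewrite /Defs.coord /=; case: ifP. Qed.

Lemma vtxP (p : Gamma R n) : p = vtx R n <-> forall i, Defs.coord i p = 0.
Proof.
split=> [-> |p0]; first exact: coord_vtx.
have x0 : (sval p).2 = 0 by have := p0 (sval p).1; rewrite /Defs.coord eqxx.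
have /andP[_] := svalP p; rewrite x0 eqxx => /eqP i0.
by apply: val_inj; rewrite /= [sval p]surjective_pairing i0 x0.
Qed.

Lemma edge_Lop (sig b : 'I_n.+1 -> R -> R) (f : Gamma R n -> R) (i : 'I_n.+1) (x : R) :
  edge (Lop sig b f) i x = if 0 < x then Li sig b f i x else Lop sig b f (vtx R n).
Proof. by rewrite /edge /Lop gpoint_val; case: (boolP (0 < x)) => x_gt0 /=; rewrite ?x_gt0. Qed.

End StarGraph.

Section EdgewisePoly.
Context {R : realType} {n : nat}.
Variable q : 'I_n.+1 -> {poly R}.
Hypothesis q_at1 : forall i, (q i).[1] = 0.

Local Notation Dq i := (deriv_recip (q i)).
Local Notation DDq i := (deriv_recip (deriv_recip (q i))).

Definition edgewise_poly (p : Gamma R n) : R := (q (sval p).1).[recip1p (sval p).2].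

Lemma edge_edgewise_poly (i : 'I_n.+1) (x : R) :
  0 <= x -> edge edgewise_poly i x = (q i).[recip1p x].
Proof.
rewrite /edge /edgewise_poly gpoint_val le_eqVlt => /orP[/eqP <- | ->] //=.
by rewrite ltxx recip1p0 !q_at1.
Qed.

Lemma edgewise_poly_coord (p : Gamma R n) :
  edgewise_poly p = \sum_i (q i).[recip1p `|Defs.coord i p|].
Proof.
rewrite (bigD1 (sval p).1) //= big1 ?addr0 => [|i /negPf i_neq].
  by rewrite ger0_norm ?coord_ge0 // /Defs.coord eqxx.
by rewrite /Defs.coord eq_sym i_neq normr0 recip1p0 q_at1.
Qed.

Lemma measurable_edgewise_poly {d} {Omega : measurableType d} (Y : Omega -> Gamma R n) :
  (forall i, measurable_fun setT (fun w => Defs.coord i (Y w))) ->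
  measurable_fun setT (fun w => edgewise_poly (Y w)).
Proof.
move=> Ymeas; under eq_fun do rewrite edgewise_poly_coord.
apply: measurable_sum => i.
have cont_i : continuous (fun y : R => (q i).[recip1p `|y|]).
  move=> x; apply: (@continuous_comp _ _ _ (fun y : R => `|y|) (fun y => (q i).[recip1p y])).
    exact: norm_continuous.
  by apply: continuous_horner_recip1p; apply: lt_le_trans (normr_ge0 _); rewrite ltrN10.
exact: measurableT_comp (continuous_measurable_fun cont_i) (Ymeas i).
Qed.

Context {sig b : 'I_n.+1 -> R -> R}.

Lemma Li_edgewise_poly (i : 'I_n.+1) (x : R) : 0 < x ->
  Li sig b edgewise_poly i x =
  2^-1 * sig i x ^+ 2 * (DDq i).[recip1p x] + b i x * (Dq i).[recip1p x].
Proof.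
move=> x_gt0; rewrite /Li (derive2_profile (edge_edgewise_poly i)) //.
by rewrite (derive1_profile (edge_edgewise_poly i)).
Qed.

Lemma Li_edgewise_poly_cvg0 (i : 'I_n.+1) (s be : R) :
  sig i @ 0^'+ --> s -> b i @ 0^'+ --> be ->
  Li sig b edgewise_poly i @ 0^'+ --> 2^-1 * s ^+ 2 * (DDq i).[1] + be * (Dq i).[1].
Proof.
move=> sig_s b_be; apply: (cvg_at_right0_eq_pos (Li_edgewise_poly i)).
apply: cvgD; last exact: cvgM b_be (horner_recip1p_cvg0 _).
apply: cvgM; last exact: horner_recip1p_cvg0.
by apply: cvgM; [exact: cvg_cst | exact: cvgM].
Qed.

Lemma Li_edgewise_poly_continuous (i : 'I_n.+1) :
  {in `]0, +oo[, continuous (sig i)} -> {in `]0, +oo[, continuous (b i)} ->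
  {in `]0, +oo[, continuous (Li sig b edgewise_poly i)}.
Proof.
move=> sig_cont b_cont x x_pos.
have x_gt0 : 0 < x by move: x_pos; rewrite in_itv /= andbT.
have horner_cont (p : {poly R}) : {for x, continuous (fun y => p.[recip1p y])}.
  by apply: continuous_horner_recip1p; lra.
apply: (continuous_eq_pos (Li_edgewise_poly i) x x_gt0).
apply: cvgD; last exact: cvgM (b_cont x x_pos) (horner_cont _).
apply: cvgM; last exact: horner_cont.
by apply: cvgM; [exact: cvg_cst | exact: cvgM (sig_cont x x_pos) (sig_cont x x_pos)].
Qed.

Lemma Li_edgewise_poly_cvgy (i : 'I_n.+1) (Ms Mb : R) :
  (forall x, 0 < x -> `|sig i x| <= Ms) -> (forall x, 0 < x -> `|b i x| <= Mb) ->
  Li sig b edgewise_poly i @ +oo --> 0.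
Proof.
move=> sig_bnd b_bnd; apply: (cvgy_eq_pos (Li_edgewise_poly i)).
rewrite -[0]addr0; apply: cvgD.
  apply: (bounded_mul_cvgy0 (M := 2^-1 * Ms ^+ 2)); last first.
    by rewrite -(horner_deriv_recip0 (Dq i)); exact: horner_recip1p_cvgy.
  move=> x x_gt0; rewrite normrM normrX ger0_norm ?invr_ge0 ?ler0n //.
  rewrite ler_wpM2l ?invr_ge0 ?ler0n // lerXn2r ?nnegrE //; last exact: sig_bnd.
  exact: le_trans (normr_ge0 _) (sig_bnd x x_gt0).
apply: (bounded_mul_cvgy0 b_bnd).
by rewrite -(horner_deriv_recip0 (q i)); exact: horner_recip1p_cvgy.
Qed.

Context {s be : 'I_n.+1 -> R} {l : R}.
Hypothesis sig_s : forall i, sig i @ 0^'+ --> s i.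
Hypothesis b_be : forall i, b i @ 0^'+ --> be i.
Hypothesis Li_vtx : forall i, 2^-1 * s i ^+ 2 * (DDq i).[1] + be i * (Dq i).[1] = l.

Lemma Lop_edgewise_poly_vtx : Lop sig b edgewise_poly (vtx R n) = l.
Proof.
rewrite /Lop /= ltxx; apply: cvg_lim => //; rewrite -(Li_vtx ord0).
exact: Li_edgewise_poly_cvg0.
Qed.

Lemma DL_edgewise_poly (eta : R) (rho : 'I_n.+1 -> R) :
  PC sig -> PC b -> (forall i, (q i).[0] = 0) ->
  eta * l = \sum_i rho i * (Dq i).[1] -> DL sig b eta rho edgewise_poly.
Proof.
move=> sig_PC b_PC q_at0 boundary; split.
- by move=> i; exact: profile_C2e (edge_edgewise_poly i).
- move=> i; split; first exact: profile_continuous (edge_edgewise_poly i).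
  by rewrite -(q_at0 i); exact: profile_cvgy (edge_edgewise_poly i).
- move=> i; have [[Ms sig_bnd] sig_cont _] := sig_PC i.
  have [[Mb b_bnd] b_cont _] := b_PC i.
  have edge_Lop_pos y :
      0 < y -> edge (Lop sig b edgewise_poly) i y = Li sig b edgewise_poly i y.
    by move=> y_gt0; rewrite edge_Lop y_gt0.
  split; last first.
    by apply: (cvgy_eq_pos edge_Lop_pos); exact: Li_edgewise_poly_cvgy sig_bnd b_bnd.
  apply/continuous_within_itvcyP; split.
    move=> x x_pos; have x_gt0 : 0 < x by move: x_pos; rewrite in_itv /= andbT.
    apply: (continuous_eq_pos edge_Lop_pos x x_gt0).
    exact: Li_edgewise_poly_continuous sig_cont b_cont x x_pos.
  rewrite edge_Lop ltxx Lop_edgewise_poly_vtx -(Li_vtx i).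
  by apply: (cvg_at_right0_eq_pos edge_Lop_pos); exact: Li_edgewise_poly_cvg0.
- rewrite Lop_edgewise_poly_vtx boundary; apply: eq_bigr => i _.
  by rewrite (rderiv0_profile (edge_edgewise_poly i)).
Qed.

End EdgewisePoly.

Section TrappedVertex.
Context {R : realType} {n : nat} {d : measure_display} {Omega : measurableType d}.
Variable X : Omega -> R -> Gamma R n.
Hypothesis X_meas : forall t i, measurable_fun setT (fun w => Defs.coord i (X w t)).
Hypothesis X_cont :
  forall w i, {within `[0, +oo[, continuous (fun t => Defs.coord i (X w t))}.

Definition exit_after (t : R) : set Omega := [set w | (t%:E < xi_v X w)%E].

Lemma measurable_at_vtx (t : R) : measurable [set w | X w t = vtx R n].
Proof.
have -> : [set w | X w t = vtx R n] = (fun w => \sum_i Defs.coord i (X w t)) @^-1` [set 0].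
  apply/seteqP; split=> w /=; first by move/vtxP => X0; rewrite big1.
  move=> X0; apply/vtxP => i.
  by apply: (psumr_eq0P (P := xpredT)) X0 i _ => // j _; exact: coord_ge0.
by rewrite -[_ @^-1` _]setTI; apply: measurable_sum => // i; exact: X_meas.
Qed.

Lemma at_vtx_from_rat (w : Omega) (u : R) :
  (forall r : rat, 0 < (ratr r : R) < u -> X w (ratr r) = vtx R n) ->
  forall s, 0 < s < u -> X w s = vtx R n.
Proof.
move=> X_rat s s_in; apply/vtxP => i.
apply: (continuous_eq0_on_rat (fun t => Defs.coord i (X w t)) 0 u s s_in).
  have /continuous_within_itvcyP[X_cont_pos _] := X_cont w i.
  by apply: X_cont_pos; case/andP: s_in; rewrite in_itv /= andbT.
by move=> r r_in; rewrite X_rat // coord_vtx.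
Qed.

Lemma xi_v_le (w : Omega) (s : R) : 0 < s -> X w s <> vtx R n -> (xi_v X w <= s%:E)%E.
Proof. by move=> s_gt0 Xs; apply: ereal_inf_lbound; exists s. Qed.

Lemma xi_v_ge (w : Omega) (u : R) :
  (forall s, 0 < s < u -> X w s = vtx R n) -> (u%:E <= xi_v X w)%E.
Proof.
move=> X_vtx; apply/ereal_infP => _ [s [s_gt0 Xs] <-].
by rewrite lee_fin leNgt; apply/negP => su; apply/Xs/X_vtx; rewrite s_gt0.
Qed.

Lemma exit_afterE (t : R) : exit_after t = \bigcup_(k : nat) \bigcap_(r : rat)
  [set w | 0 < (ratr r : R) < t + k.+1%:R^-1 -> X w (ratr r) = vtx R n].
Proof.
rewrite /exit_after; apply/seteqP; split=> w /=.
- move=> t_xi; have [k tk_xi] : exists k : nat, ((t + k.+1%:R^-1)%:E <= xi_v X w)%E.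
    move: t_xi; case: (xi_v X w) => [y | | //]; last by exists 0%N; rewrite leey.
    by rewrite lte_fin => /ltr_add_invr[k tk_y]; exists k; rewrite lee_fin ltW.
  exists k => // r _ /andP[r_gt0 r_lt]; apply/eqP; apply: contraT => /eqP Xr.
  have := le_trans tk_xi (xi_v_le w (ratr r) r_gt0 Xr).
  by rewrite lee_fin leNgt r_lt.
- move=> [k _ X_rat].
  have := xi_v_ge w _ (at_vtx_from_rat w _ (fun r => X_rat r I)).
  by apply: lt_le_trans; rewrite lte_fin ltrDl invr_gt0 ltr0n.
Qed.

Lemma measurable_exit_after (t : R) : measurable (exit_after t).
Proof.
rewrite exit_afterE; apply: bigcupT_measurable => k.
rewrite -[X in measurable X]setCK setC_bigcap; apply: measurableC.
apply: bigcupT_measurable_rat => r; apply: measurableC.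
have [r_in | r_out] := boolP (0 < (ratr r : R) < t + k.+1%:R^-1).
  have -> : [set w | true -> X w (ratr r) = vtx R n] = [set w | X w (ratr r) = vtx R n].
    by apply/seteqP; split=> w /=; [apply | move=> ->].
  exact: measurable_at_vtx.
have -> : [set w | false -> X w (ratr r) = vtx R n] = setT by apply/seteqP; split.
exact: measurableT.
Qed.

Lemma exit_after_vtx (t : R) (w : Omega) : 0 < t -> exit_after t w -> X w t = vtx R n.
Proof.
move=> t_gt0 t_xi; apply/eqP; apply: contraT => /eqP Xt.
by move: t_xi; rewrite /exit_after /= ltNge xi_v_le.
Qed.

Lemma Tsg_trapped (P : Gamma R n -> probability Omega R) (f : Gamma R n -> R) (t : R) :
  0 < t -> P (vtx R n) (exit_after t) = 1%E ->
  measurable_fun setT (fun w => f (X w t)) -> Tsg P X t f (vtx R n) = f (vtx R n).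
Proof.
move=> t_gt0 stay f_meas.
have f_ae : ae_eq (P (vtx R n)) setT (fun w => (f (X w t))%:E) (cst (f (vtx R n))%:E).
  exists (~` exit_after t); split; first exact/measurableC/measurable_exit_after.
    have := probability_setC (P (vtx R n)) (measurable_exit_after t).
    by rewrite stay subee.
  by move=> w /= Xw stay_w; apply: Xw => _; rewrite exit_after_vtx.
rewrite /Tsg (ae_eq_integral _ _ _ _ _ f_ae) //; last exact/measurable_EFinP.
by rewrite integral_cst //= probability_setT mule1.
Qed.

End TrappedVertex.

Lemma gen_lim_fixed_point {R : realType} {n : nat}
    {T : R -> (Gamma R n -> R) -> Gamma R n -> R} {f g : Gamma R n -> R} {p : Gamma R n} :
  gen_lim T f g -> (forall t, 0 < t -> T t f p = f p) -> g p = 0.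
Proof.
move=> Tfg T_fixed; apply/normr0_eq0/eqP; rewrite eq_le normr_ge0 andbT.
apply/ler_addgt0Pr => e e_gt0; rewrite add0r.
have : \forall t \near 0^'+, 0 < t /\ `|(T t f p - f p) / t - g p| < e.
  near=> t; split; near: t; first exact: nbhs_right_gt.
  by apply: filterS (Tfg e e_gt0) => t; apply.
move=> /filter_ex[t [t_gt0]].
by rewrite T_fixed // subrr mul0r sub0r normrN => /ltW.
Unshelve. all: by end_near. Qed.

Theorem proposition3p2 (R : realType) (n : nat)
  (sig b : 'I_n.+1 -> R -> R) (sig0 eta : R) (rho : 'I_n.+1 -> R)
  (d : measure_display) (Omega : measurableType d)
  (P : Gamma R n -> probability Omega R) (X : Omega -> R -> Gamma R n) :
  PC sig -> PC b -> 0 < sig0 -> (forall i x, 0 < x -> sig0 < sig i x) ->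
  0 <= eta -> (forall i, 0 < rho i) -> \sum_i rho i = 1 ->
  generated_process sig b eta rho P X ->
  ~ (forall t : R, 0 < t ->
       P (vtx R n) [set w | (t%:E < xi_v X w)%E] = 1%E).
Proof.
move=> sig_PC b_PC sig0_gt0 sig_gt _ _ rho1 [[X_meas X_cont _ _] [_ _ [_ generator]]] trapped.
pose s i := lim (sig i @ (0:R)^'+); pose be i := lim (b i @ (0:R)^'+).
have sig_s i : sig i @ 0^'+ --> s i by have [_ _] := sig_PC i.
have b_be i : b i @ 0^'+ --> be i by have [_ _] := b_PC i.
have s_neq0 i : s i != 0.
  rewrite gt_eqF // (lt_le_trans sig0_gt0) //; apply: limr_ge (sig_s i) _.
  by near=> x; apply/ltW/sig_gt; near: x; exact: nbhs_right_gt.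
pose q i := test_poly eta (2 * (1 - be i * eta) / s i ^+ 2).
have q_at1 i : (q i).[1] = 0 by exact: test_poly_at1.
have Li_vtx i : 2^-1 * s i ^+ 2 * (deriv_recip (deriv_recip (q i))).[1]
                + be i * (deriv_recip (q i)).[1] = 1.
  by rewrite deriv_recip2_test_poly_at1 deriv_recip_test_poly_at1; field.
have boundary : eta * 1 = \sum_i rho i * (deriv_recip (q i)).[1].
  by under eq_bigr do rewrite deriv_recip_test_poly_at1; rewrite -mulr_suml rho1 mulr1 mul1r.
have f_DL := DL_edgewise_poly q q_at1 sig_s b_be Li_vtx eta rho sig_PC b_PC
  (fun i => test_poly_at0 _ _) boundary.
have Tf_vtx t : 0 < t -> Tsg P X t (edgewise_poly q) (vtx R n) = edgewise_poly q (vtx R n).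
  move=> t_gt0; apply: (Tsg_trapped X X_meas X_cont _ _ _ t_gt0 (trapped t t_gt0)).
  exact: (measurable_edgewise_poly q q_at1 (fun w => X w t) (X_meas t)).
have := gen_lim_fixed_point (generator _ f_DL) Tf_vtx.
by rewrite (Lop_edgewise_poly_vtx q q_at1 sig_s b_be Li_vtx); apply/eqP; rewrite oner_eq0.
Unshelve. all: by end_near. Qed.
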